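(* Let $X,Y,A,B$ be non-empty finite sets. Then $\mathcal R_{\rm lowc}$ is a resource over $(X\times Y,A\times B)$ and $\mathsf{QC}(\mathcal R_{\rm lowc})=\mathcal Q_{\rm lowc}$.
   Context: For $n\in\mathbb N$, finite sets $S_i,T_i$, operators $U_i:\mathbb C^X\to\mathbb C^A\otimes\mathbb C^{S_i}$ with $\sum_{i=1}^nU_i^*U_i=I_X$ and isometries $V_i:\mathbb C^Y\to\mathbb C^B\otimes\mathbb C^{T_i}$, the column $[U_i\otimes V_i]_{i=1}^n:\mathbb C^{XY}\to\bigoplus_i\mathbb C^{AB}\otimes\mathbb C^{S_i}\otimes\mathbb C^{T_i}\cong\mathbb C^{AB}\otimes K$ with $K=\bigoplus_i\mathbb C^{S_i}\otimes\mathbb C^{T_i}$ is an isometry, regarded as a block operator isometry over $(XY,AB)$ with entries in $\mathcal B(\mathbb C,K)$. $\mathcal R_{\rm lowc}$ is the set of all finite entrywise direct sums of such isometries. A block operator isometry over $(Z,C)$ is an isometry $W=(W_{c,z}):H^Z\to L^C$; $\phi_W:\mathcal S_1^{C,Z}\to\mathcal B(H,L)$, $\phi_W(e_ze_c^* )=W_{c,z}$; for a normal state $\sigma$, $\Gamma_{W,\sigma}(\epsilon_{z,z'})=\sum_{c,c'}\sigma(W_{c,z}^*W_{c',z'})\epsilon_{c,c'}$ and $\mathsf{QC}(\mathcal R)=\{\Gamma_{W,\sigma}:W\in\mathcal R\}$. A resource over $(Z,C)$ is a family of block operator isometries closed under finite entrywise direct sums and separating: for every nonzero $S\in\mathcal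 S_1^{C,Z}$ (operators $\mathbb C^C\to\mathbb C^Z$) some $W$ in the family has $\phi_W(S)\neq0$. $\mathcal Q_{\rm lowc}$ is the set of channels $\Gamma=\sum_{i=1}^n\Psi_i\otimes\Phi_i:M_{XY}\to M_{AB}$, where $\Psi_i:M_X\to M_A$ are completely positive with $\sum_i\Psi_i$ trace preserving and $\Phi_i:M_Y\to M_B$ are quantum channels. *)

From HB Require Import structures.
From mathcomp Require Import all_boot all_order all_algebra.
From mathcomp Require Import reals.
From mathcomp Require Import complex.
Set Implicit Arguments. Unset Strict Implicit. Unset Printing Implicit Defensive.
Import Order.TTheory GRing.Theory Num.Theory.
Local Open Scope ring_scope.
Local Open Scope complex_scope.

Section LowC.
Variable R : realType.
Local Notation C := R[i].

(* A block operator over (Z,Cc) with H = C^h, L = C^l: the family of entries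
   W_{c,z} in B(H,L) = 'M_(l,h). *)
Record boi (Z Cc : finType) := Boi {
  bh : nat;
  bl : nat;
  bW : Cc -> Z -> 'M[C]_(bl, bh) }.

Definition adjmx m n (M : 'M[C]_(m, n)) : 'M[C]_(n, m) := (map_mx (@conjc R) M)^T.

(* W : H^Z -> L^C is an isometry: (W^* W)_{z,z'} = sum_c W_{c,z}^* W_{c,z'} = delta_{z,z'} I_H *)
Definition is_isom (Z Cc : finType) (W : boi Z Cc) : Prop :=
  forall z z' : Z,
    \sum_(c : Cc) adjmx (bW W c z) *m bW W c z' = ((z == z')%:R : C)%:M.

Definition dsum (Z Cc : finType) (W1 W2 : boi Z Cc) : boi Z Cc :=
  @Boi Z Cc (bh W1 + bh W2) (bl W1 + bl W2)
    (fun c z => block_mx (bW W1 c z) 0 0 (bW W2 c z)).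

(* phi_W : S_1^{C,Z} -> B(H,L), phi_W(e_z e_c^* ) = W_{c,z}, extended linearly;
   an operator S : C^Cc -> C^Z is given by its matrix entries S z c. *)
Definition phiW (Z Cc : finType) (W : boi Z Cc) (S : Z -> Cc -> C) : 'M[C]_(bl W, bh W) :=
  \sum_(z : Z) \sum_(c : Cc) S z c *: bW W c z.

Definition resource (Z Cc : finType) (F : boi Z Cc -> Prop) : Prop :=
  [/\ (forall W, F W -> is_isom W),
      (forall W1 W2, F W1 -> F W2 -> F (dsum W1 W2)) &
      (forall S : Z -> Cc -> C, (exists z c, S z c != 0) ->
         exists W, F W /\ phiW W S != 0)].

Definition is_state h (sigma : 'M[C]_h -> C) : Prop :=
  [/\ (forall (a : C) (T T' : 'M[C]_h), sigma (a *: T + T') = a * sigma T + sigma T'),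
      (forall T : 'M[C]_h, 0 <= sigma (adjmx T *m T)) &
      sigma 1%:M = 1].

Definition fmx (I : finType) := I -> I -> C.

Definition munit (I : finType) (i i' : I) : fmx I :=
  fun u u' => ((u == i) && (u' == i'))%:R.

Definition ftr (I : finType) (M : fmx I) : C := \sum_(i : I) M i i.

Definition psd (I : finType) (M : fmx I) : Prop :=
  forall v : I -> C, 0 <= \sum_(i : I) \sum_(j : I) (v i)^* * M i j * v j.

Definition lin_map (I J : finType) (Phi : fmx I -> fmx J) : Prop :=
  forall (a : C) (M N : fmx I) (j j' : J),
    Phi (fun i i' => a * M i i' + N i i') j j' = a * Phi M j j' + Phi N j j'.

(* Phi (x) id_{M_n} *)
Definition ampl (I J : finType) (Phi : fmx I -> fmx J) (n : nat) (M : fmx (I * 'I_n)%type) :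
  fmx (J * 'I_n)%type :=
  fun jk jk' => Phi (fun i i' => M (i, jk.2) (i', jk'.2)) jk.1 jk'.1.

Definition cp_map (I J : finType) (Phi : fmx I -> fmx J) : Prop :=
  lin_map Phi /\
  forall (n : nat) (M : fmx (I * 'I_n)%type), psd M -> psd (ampl Phi M).

Definition tp_map (I J : finType) (Phi : fmx I -> fmx J) : Prop :=
  forall M : fmx I, ftr (Phi M) = ftr M.

Definition qchannel (I J : finType) (Phi : fmx I -> fmx J) : Prop :=
  cp_map Phi /\ tp_map Phi.

(* tensor product Psi (x) Phi : M_{XY} -> M_{AB} (linear extension from
   matrix units epsilon_{(x,y),(x',y')} = epsilon_{x,x'} (x) epsilon_{y,y'}) *)
Definition tensor_map (X Y A B : finType) (Psi : fmx X -> fmx A) (Phi : fmx Y -> fmx B)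
  (M : fmx (X * Y)%type) : fmx (A * B)%type :=
  fun ab ab' => \sum_(x : X) \sum_(x' : X) \sum_(y : Y) \sum_(y' : Y)
     M (x, y) (x', y') * Psi (munit x x') ab.1 ab'.1 * Phi (munit y y') ab.2 ab'.2.

Definition chan_eq (I J : finType) (G1 G2 : fmx I -> fmx J) : Prop :=
  forall M i j, G1 M i j = G2 M i j.

Definition GammaW (Z Cc : finType) (W : boi Z Cc) (sigma : 'M[C]_(bh W) -> C)
  (M : fmx Z) : fmx Cc :=
  fun c c' => \sum_(z : Z) \sum_(z' : Z)
     M z z' * sigma (adjmx (bW W c z) *m bW W c' z').

Definition QC (Z Cc : finType) (F : boi Z Cc -> Prop) (G : fmx Z -> fmx Cc) : Prop :=
  exists W, F W /\ exists sigma : 'M[C]_(bh W) -> C, is_state sigma /\ chan_eq G (GammaW sigma).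

(* Generators: n, S_i = 'I_(s i), T_i = 'I_(t i),
   U_i : C^X -> C^A (x) C^{S_i} with entries U i a s x,
   V_i : C^Y -> C^B (x) C^{T_i} with entries V i b t y,
   sum_i U_i^* U_i = I_X, each V_i an isometry; the column [U_i (x) V_i]
   seen as a block operator over (XY,AB) with entries in B(C,K),
   K = (+)_i C^{S_i} (x) C^{T_i} identified with C^l via a bijection f. *)
Definition lowc_gen (X Y A B : finType) (W : boi (X * Y)%type (A * B)%type) : Prop :=
  exists (n : nat) (s t : 'I_n -> nat)
         (U : forall i : 'I_n, A -> 'I_(s i) -> X -> C)
         (V : forall i : 'I_n, B -> 'I_(t i) -> Y -> C)
         (l : nat) (f : 'I_l -> {i : 'I_n & ('I_(s i) * 'I_(t i))%type}),
    [/\ bijective f,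
        (forall x x' : X,
           \sum_(i < n) \sum_(a : A) \sum_(k : 'I_(s i))
              (U i a k x)^* * U i a k x' = (x == x')%:R),
        (forall (i : 'I_n) (y y' : Y),
           \sum_(b : B) \sum_(k : 'I_(t i))
              (V i b k y)^* * V i b k y' = (y == y')%:R) &
        W = @Boi (X * Y)%type (A * B)%type 1 l
              (fun ab xy => \matrix_(k < l, j < 1)
                 let: existT i st := f k in
                 U i ab.1 st.1 xy.1 * V i ab.2 st.2 xy.2)].

Inductive Rlowc (X Y A B : finType) : boi (X * Y)%type (A * B)%type -> Prop :=
| Rlowc_gen W : lowc_gen W -> Rlowc W
| Rlowc_sum W1 W2 : Rlowc W1 -> Rlowc W2 -> Rlowc (dsum W1 W2).

Definition Qlowc (X Y A B : finType) (G : fmx (X * Y)%type -> fmx (A * B)%type) : Prop :=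
  exists (n : nat) (Psi : 'I_n -> fmx X -> fmx A) (Phi : 'I_n -> fmx Y -> fmx B),
    [/\ (forall i, cp_map (Psi i)),
        tp_map (fun M a a' => \sum_(i < n) Psi i M a a'),
        (forall i, qchannel (Phi i)) &
        chan_eq G (fun M ab ab' => \sum_(i < n) tensor_map (Psi i) (Phi i) M ab ab')].

End LowC.

From HB Require Import structures.
From mathcomp Require Import all_boot all_order all_algebra.
From mathcomp Require Import reals complex spectral sesquilinear.
From mathcomp Require Import ring.
Set Implicit Arguments. Unset Strict Implicit. Unset Printing Implicit Defensive.
Import GRing.Theory Num.Theory Num.Def.
Local Open Scope ring_scope.
Local Open Scope sesquilinear_scope.

(* For a generator W = [U_i (x) V_i]_i the input space is H = C, so a positive
   functional sigma on B(H) is sigma(1) times evaluation, and Gamma_{W,sigma} is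
   sigma(1) * sum_i Psi_i (x) Phi_i with Psi_i, Phi_i the maps with Kraus operators
   U_i, V_i; the isometry conditions on U and V say exactly that sum_i Psi_i is
   trace preserving and that each Phi_i is a channel.  On a direct sum W1 (+) W2 a
   state restricts to positive functionals on the two diagonal blocks, so Gamma
   splits into two such decompositions whose trace weights add up to
   sigma(1) = 1; the induction over R_lowc therefore tracks decompositions with
   an arbitrary weight sigma(1) >= 0.  Conversely, a completely positive map has
   Kraus operators, read off from a Gram factorisation G^* G of its positive
   semidefinite Choi matrix (spectral theorem), so every element of Q_lowc is
   Gamma_{W,sigma} for a single generator and the unique state on M_1.
   Separation: if S_{(x0,y0),(a0,b0)} <> 0, the generator embedding C^X and C^Y
   into the a0- and b0-summands has phi_W(S) <> 0. *)

Section LowcResource.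
Variable R : realType.
Local Notation C := R[i].

Lemma sum_kronecker_l (I : finType) (x : I) (g : I -> C) :
  \sum_u (u == x)%:R * g u = g x.
Proof.
rewrite (bigD1 x) //= eqxx mul1r big1 ?addr0 // => u /negbTE ->; exact: mul0r.
Qed.

Lemma sum_kronecker_r (I : finType) (x : I) (g : I -> C) :
  \sum_u g u * (u == x)%:R = g x.
Proof. by rewrite -[RHS](sum_kronecker_l x); apply: eq_bigr => u _; rewrite mulrC. Qed.

Lemma sum_kronecker2 (I J : finType) (x : I) (y : J) (g : I -> J -> C) :
  \sum_u \sum_v ((u == x) && (v == y))%:R * g u v = g x y.
Proof.
rewrite -(sum_kronecker_l x (g^~ y)); apply: eq_bigr => u _.
rewrite -(sum_kronecker_l y (g u)) mulr_sumr; apply: eq_bigr => v _.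
by rewrite -mulnb natrM mulrA.
Qed.

Lemma sumr_pair (I J : finType) (F : I * J -> C) :
  \sum_p F p = \sum_i \sum_j F (i, j).
Proof. by rewrite pair_bigA; apply: eq_bigr => -[]. Qed.

Lemma exchange_big3 (I1 I2 I3 : finType) (F : I1 -> I2 -> I3 -> C) :
  \sum_i1 \sum_i2 \sum_i3 F i1 i2 i3 = \sum_i3 \sum_i1 \sum_i2 F i1 i2 i3.
Proof. by under eq_bigr => ? _ do rewrite exchange_big; rewrite exchange_big. Qed.

Lemma exchange_big4 (I1 I2 I3 I4 : finType) (F : I1 -> I2 -> I3 -> I4 -> C) :
  \sum_i1 \sum_i2 \sum_i3 \sum_i4 F i1 i2 i3 i4 =
  \sum_i4 \sum_i1 \sum_i2 \sum_i3 F i1 i2 i3 i4.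
Proof. by under eq_bigr => ? _ do rewrite exchange_big3; rewrite exchange_big. Qed.

Lemma exchange_big5 (I1 I2 I3 I4 I5 : finType) (F : I1 -> I2 -> I3 -> I4 -> I5 -> C) :
  \sum_i1 \sum_i2 \sum_i3 \sum_i4 \sum_i5 F i1 i2 i3 i4 i5 =
  \sum_i5 \sum_i1 \sum_i2 \sum_i3 \sum_i4 F i1 i2 i3 i4 i5.
Proof. by under eq_bigr => ? _ do rewrite exchange_big4; rewrite exchange_big. Qed.

Lemma exchange_big6 (I1 I2 I3 I4 I5 I6 : finType)
    (F : I1 -> I2 -> I3 -> I4 -> I5 -> I6 -> C) :
  \sum_i1 \sum_i2 \sum_i3 \sum_i4 \sum_i5 \sum_i6 F i1 i2 i3 i4 i5 i6 =
  \sum_i6 \sum_i1 \sum_i2 \sum_i3 \sum_i4 \sum_i5 F i1 i2 i3 i4 i5 i6.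
Proof. by under eq_bigr => ? _ do rewrite exchange_big5; rewrite exchange_big. Qed.

Lemma mulr_sum2 (I J : finType) (m : C) (f : I -> C) (g : J -> C) :
  (\sum_i f i) * m * (\sum_j g j) = \sum_i \sum_j f i * m * g j.
Proof.
rewrite !mulr_suml; apply: eq_bigr => i _.
by rewrite mulr_sumr; apply: eq_bigr => j _.
Qed.

Lemma ftr_sum (J : finType) n (F : 'I_n -> fmx R J) :
  ftr (fun a a' => \sum_(i < n) F i a a') = \sum_(i < n) ftr (F i).
Proof. by rewrite /ftr exchange_big. Qed.

Lemma ftr_munit (I : finType) (x x' : I) : ftr (munit R x x') = (x == x')%:R.
Proof.
rewrite /ftr /munit; under eq_bigr => u _ do rewrite -mulnb natrM.
exact: (sum_kronecker_l x (fun u => (u == x')%:R)).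
Qed.

Lemma sum_ftr (I : finType) (M : fmx R I) :
  \sum_x \sum_x' M x x' * (x == x')%:R = ftr M.
Proof.
apply: eq_bigr => x _; under eq_bigr => x' _ do rewrite eq_sym.
exact: sum_kronecker_r.
Qed.

(** * Completely positive maps in Kraus form *)

Definition kraus_map (I J : finType) s (K : J -> 'I_s -> I -> C) : fmx R I -> fmx R J :=
  fun M a a' => \sum_x \sum_x' M x x' * \sum_k (K a k x)^* * K a' k x'.

Section KrausMap.
Variables (I J : finType) (s : nat) (K : J -> 'I_s -> I -> C).

Lemma kraus_map_lin : lin_map (kraus_map K).
Proof.
move=> c M N a a'; rewrite /kraus_map mulr_sumr -big_split; apply: eq_bigr => x _.
by rewrite mulr_sumr -big_split; apply: eq_bigr => x' _; rewrite mulrDl mulrA.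
Qed.

Lemma kraus_map_munit x x' a a' :
  kraus_map K (munit R x x') a a' = \sum_k (K a k x)^* * K a' k x'.
Proof. exact: sum_kronecker2. Qed.

Lemma kraus_map_cp : cp_map (kraus_map K).
Proof.
split; first exact: kraus_map_lin.
move=> n M psdM v; rewrite /ampl /kraus_map /=.
pose w k (q : I * 'I_n) := \sum_a K a k q.1 * v (a, q.2).
suff -> : \sum_p \sum_p' (v p)^* * (\sum_x \sum_x' M (x, p.2) (x', p'.2) *
      \sum_k (K p.1 k x)^* * K p'.1 k x') * v p'
   = \sum_k \sum_q \sum_q' (w k q)^* * M q q' * w k q'.
  by apply: sumr_ge0 => k _; exact: psdM.
(* both sides are the sum over (a, j, a', j', x, x', k) of one product *)
transitivity (\sum_a \sum_j \sum_a' \sum_j' \sum_x \sum_x' \sum_k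
   ((v (a, j))^* * (K a k x)^* * M (x, j) (x', j') * K a' k x' * v (a', j'))).
  rewrite sumr_pair; apply: eq_bigr => a _; apply: eq_bigr => j _.
  rewrite sumr_pair; apply: eq_bigr => a' _; apply: eq_bigr => j' _ /=.
  rewrite mulr_sumr mulr_suml; apply: eq_bigr => x _.
  rewrite mulr_sumr mulr_suml; apply: eq_bigr => x' _.
  rewrite !mulr_sumr mulr_suml; apply: eq_bigr => k _; ring.
transitivity (\sum_k \sum_x \sum_j \sum_x' \sum_j' \sum_a \sum_a'
   ((v (a, j))^* * (K a k x)^* * M (x, j) (x', j') * K a' k x' * v (a', j'))).
  rewrite [RHS]exchange_big6; apply: eq_bigr => a _.
  rewrite [RHS]exchange_big3; apply: eq_bigr => j _.
  rewrite [RHS]exchange_big5; apply: eq_bigr => a' _.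
  rewrite [RHS]exchange_big4; apply: eq_bigr => j' _.
  by rewrite [LHS]exchange_big3.
apply: eq_bigr => k _; rewrite sumr_pair; apply: eq_bigr => x _; apply: eq_bigr => j _.
rewrite sumr_pair; apply: eq_bigr => x' _; apply: eq_bigr => j' _ /=.
rewrite /w rmorph_sum /= mulr_sum2; apply: eq_bigr => a _; apply: eq_bigr => a' _.
by rewrite rmorphM /=; ring.
Qed.

Lemma ftr_kraus_map M :
  ftr (kraus_map K M) = \sum_x \sum_x' M x x' * \sum_a \sum_k (K a k x)^* * K a k x'.
Proof.
rewrite /ftr /kraus_map exchange_big; apply: eq_bigr => x _.
by rewrite exchange_big; apply: eq_bigr => x' _; rewrite mulr_sumr.
Qed.

Lemma kraus_map_qchannel :
  (forall x x', \sum_a \sum_k (K a k x)^* * K a k x' = (x == x')%:R) ->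
  qchannel (kraus_map K).
Proof.
move=> isoK; split; first exact: kraus_map_cp.
by move=> M; rewrite ftr_kraus_map -sum_ftr; under eq_bigr do under eq_bigr do rewrite isoK.
Qed.

End KrausMap.

Lemma ftr_sum_kraus_map (I J : finType) n (s : 'I_n -> nat)
    (U : forall i : 'I_n, J -> 'I_(s i) -> I -> C) M :
  (forall x x', \sum_(i < n) \sum_a \sum_(k : 'I_(s i)) (U i a k x)^* * U i a k x'
      = (x == x')%:R) ->
  ftr (fun a a' => \sum_(i < n) kraus_map (U i) M a a') = ftr M.
Proof.
move=> tpU; rewrite ftr_sum -sum_ftr.
under eq_bigr => i _ do rewrite ftr_kraus_map.
rewrite exchange_big; apply: eq_bigr => x _.
rewrite exchange_big; apply: eq_bigr => x' _.
by rewrite -tpU mulr_sumr.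
Qed.

Lemma tensor_kraus_map (X Y A B : finType) sK (K : A -> 'I_sK -> X -> C)
    sL (L : B -> 'I_sL -> Y -> C) (M : fmx R (X * Y)%type) ab ab' :
  tensor_map (kraus_map K) (kraus_map L) M ab ab' =
  \sum_x \sum_x' \sum_y \sum_y' \sum_k \sum_k'
     M (x, y) (x', y') * ((K ab.1 k x)^* * K ab'.1 k x') * ((L ab.2 k' y)^* * L ab'.2 k' y').
Proof.
rewrite /tensor_map; apply: eq_bigr => x _; apply: eq_bigr => x' _.
apply: eq_bigr => y _; apply: eq_bigr => y' _.
rewrite !kraus_map_munit -mulrA mulr_suml mulr_sumr; apply: eq_bigr => k _.
by rewrite !mulr_sumr; apply: eq_bigr => k' _; rewrite mulrA.
Qed.

Lemma eq_tensor_map (X Y A B : finType) (Psi Psi' : fmx R X -> fmx R A)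
    (Phi Phi' : fmx R Y -> fmx R B) M ab ab' :
  (forall x x' a a', Psi (munit R x x') a a' = Psi' (munit R x x') a a') ->
  (forall y y' b b', Phi (munit R y y') b b' = Phi' (munit R y y') b b') ->
  tensor_map Psi Phi M ab ab' = tensor_map Psi' Phi' M ab ab'.
Proof.
move=> ePsi ePhi; rewrite /tensor_map; apply: eq_bigr => x _; apply: eq_bigr => x' _.
by apply: eq_bigr => y _; apply: eq_bigr => y' _; rewrite ePsi ePhi.
Qed.

Lemma tensor_mapZl (X Y A B : finType) (Psi : fmx R X -> fmx R A)
    (Phi : fmx R Y -> fmx R B) (c : C) M ab ab' :
  tensor_map (fun N a a' => c * Psi N a a') Phi M ab ab' = c * tensor_map Psi Phi M ab ab'.
Proof.
rewrite /tensor_map mulr_sumr; apply: eq_bigr => x _.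
rewrite mulr_sumr; apply: eq_bigr => x' _.
rewrite mulr_sumr; apply: eq_bigr => y _.
by rewrite mulr_sumr; apply: eq_bigr => y' _; ring.
Qed.

Lemma cp_mapZ (I J : finType) (Psi : fmx R I -> fmx R J) (c : C) :
  0 <= c -> cp_map Psi -> cp_map (fun M a a' => c * Psi M a a').
Proof.
move=> c_ge0 [linPsi cpPsi]; split.
  by move=> a M N j j'; rewrite linPsi; ring.
move=> n M /cpPsi psdM v; rewrite /ampl /=.
under eq_bigr do under eq_bigr do rewrite mulrCA -mulrA.
under eq_bigr do rewrite -mulr_sumr.
by rewrite -mulr_sumr; apply: mulr_ge0; last exact: psdM.
Qed.

(** * Block operators and positive functionals *)

Lemma adjmx0 m n : adjmx (0 : 'M[C]_(m, n)) = 0.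
Proof. by apply/matrixP => i j; rewrite !mxE conjc0. Qed.

Lemma adjmx_block m1 m2 n1 n2 (a : 'M[C]_(m1, n1)) (b : 'M[C]_(m1, n2))
    (c : 'M[C]_(m2, n1)) (d : 'M[C]_(m2, n2)) :
  adjmx (block_mx a b c d) = block_mx (adjmx a) (adjmx c) (adjmx b) (adjmx d).
Proof. by rewrite /adjmx map_block_mx tr_block_mx. Qed.

Lemma adjmx_mul_block_diag m1 m2 n1 n2 p1 p2 (a : 'M[C]_(m1, n1)) (d : 'M[C]_(m2, n2))
    (a' : 'M[C]_(m1, p1)) (d' : 'M[C]_(m2, p2)) :
  adjmx (block_mx a 0 0 d) *m block_mx a' 0 0 d' =
  block_mx (adjmx a *m a') 0 0 (adjmx d *m d').
Proof. by rewrite adjmx_block !adjmx0 mulmx_block !mulmx0 !mul0mx !addr0 !add0r. Qed.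

Lemma sum_block_diag (I : finType) m1 m2 n1 n2
    (P : I -> 'M[C]_(m1, n1)) (Q : I -> 'M[C]_(m2, n2)) :
  \sum_i block_mx (P i) 0 0 (Q i) = block_mx (\sum_i P i) 0 0 (\sum_i Q i).
Proof.
apply: (big_rec3 (fun a b c => a = block_mx b 0 0 c)); first by rewrite block_mx0.
by move=> i a b c _ ->; rewrite add_block_mx !addr0.
Qed.

Lemma dsum_isom (Z Cc : finType) (W1 W2 : boi R Z Cc) :
  is_isom W1 -> is_isom W2 -> is_isom (dsum W1 W2).
Proof.
move=> isoW1 isoW2 z z'; under eq_bigr do rewrite adjmx_mul_block_diag.
by rewrite sum_block_diag isoW1 isoW2 -scalar_mx_block.
Qed.

Definition positive_fun h (sigma : 'M[C]_h -> C) :=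
  (forall (a : C) (T T' : 'M[C]_h), sigma (a *: T + T') = a * sigma T + sigma T') /\
  (forall T : 'M[C]_h, 0 <= sigma (adjmx T *m T)).

Section PositiveFun.
Variables (h : nat) (sigma : 'M[C]_h -> C).
Hypothesis sigma_pos : positive_fun sigma.

Lemma positive_fun0 : sigma 0 = 0.
Proof.
have := (proj1 sigma_pos) 1 0 0; rewrite scaler0 addr0 mul1r.
by move/(congr1 (fun z => z - sigma 0)); rewrite subrr addrK.
Qed.

Lemma positive_funD T T' : sigma (T + T') = sigma T + sigma T'.
Proof. by rewrite -[T]scale1r (proj1 sigma_pos) mul1r scale1r. Qed.

Lemma positive_fun1_ge0 : 0 <= sigma 1%:M.
Proof.
have adj1 : adjmx (1%:M : 'M[C]_h) = 1%:M.
  by apply/matrixP => i j; rewrite !mxE conjc_nat eq_sym.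
by have := (proj2 sigma_pos) 1%:M; rewrite adj1 mulmx1.
Qed.

End PositiveFun.

Lemma positive_fun_scalar (sigma : 'M[C]_1 -> C) T :
  positive_fun sigma -> sigma T = T 0 0 * sigma 1%:M.
Proof.
move=> sigma_pos; have -> : T = T 0 0 *: 1%:M + 0.
  by apply/matrixP => i j; rewrite !ord1 !mxE eqxx mulr1n addr0 mulr1.
by rewrite (proj1 sigma_pos) positive_fun0 // addr0 !mxE eqxx mulr1n addr0 mulr1.
Qed.

Lemma positive_fun_ul h1 h2 (sigma : 'M[C]_(h1 + h2) -> C) :
  positive_fun sigma -> positive_fun (fun T : 'M[C]_h1 => sigma (block_mx T 0 0 (0 : 'M_h2))).
Proof.
move=> [linS posS]; split.
  by move=> a T T'; rewrite -linS scale_block_mx add_block_mx !scaler0 !addr0.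
by move=> T; have := posS (block_mx T 0 0 (0 : 'M_h2)); rewrite adjmx_mul_block_diag adjmx0 mul0mx.
Qed.

Lemma positive_fun_dr h1 h2 (sigma : 'M[C]_(h1 + h2) -> C) :
  positive_fun sigma -> positive_fun (fun T : 'M[C]_h2 => sigma (block_mx (0 : 'M_h1) 0 0 T)).
Proof.
move=> [linS posS]; split.
  by move=> a T T'; rewrite -linS scale_block_mx add_block_mx !scaler0 !addr0.
by move=> T; have := posS (block_mx (0 : 'M_h1) 0 0 T); rewrite adjmx_mul_block_diag adjmx0 mul0mx.
Qed.

Lemma GammaW_dsum (Z Cc : finType) (W1 W2 : boi R Z Cc)
    (sigma : 'M[C]_(bh W1 + bh W2) -> C) M c c' :
  positive_fun sigma ->
  GammaW (W := dsum W1 W2) sigma M c c' =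
  GammaW (W := W1) (fun T => sigma (block_mx T 0 0 0)) M c c' +
  GammaW (W := W2) (fun T => sigma (block_mx 0 0 0 T)) M c c'.
Proof.
move=> sigma_pos; rewrite /GammaW -big_split; apply: eq_bigr => z _.
rewrite -big_split; apply: eq_bigr => z' _ /=.
by rewrite -mulrDr adjmx_mul_block_diag -positive_funD // add_block_mx !addr0 add0r.
Qed.

(** * Local operations with sub-normalised trace *)

Definition Qlowc_scaled (X Y A B : finType) (p : C) (G : fmx R (X * Y)%type -> fmx R (A * B)%type) :=
  exists (n : nat) (Psi : 'I_n -> fmx R X -> fmx R A) (Phi : 'I_n -> fmx R Y -> fmx R B),
    [/\ (forall i, cp_map (Psi i)),
        (forall M, ftr (fun a a' => \sum_(i < n) Psi i M a a') = p * ftr M),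
        (forall i, qchannel (Phi i)) &
        chan_eq G (fun M ab ab' => \sum_(i < n) tensor_map (Psi i) (Phi i) M ab ab')].

Section QlowcScaled.
Variables X Y A B : finType.
Implicit Types (p : C) (G : fmx R (X * Y)%type -> fmx R (A * B)%type).

Lemma Qlowc_scaled_ext p G G' : chan_eq G G' -> Qlowc_scaled p G' -> Qlowc_scaled p G.
Proof.
move=> eG [n [Psi [Phi [cpPsi trPsi chPhi ePsiPhi]]]]; exists n, Psi, Phi; split=> //.
by move=> M ab ab'; rewrite eG ePsiPhi.
Qed.

Lemma Qlowc_scaled_add p1 p2 G1 G2 :
  Qlowc_scaled p1 G1 -> Qlowc_scaled p2 G2 ->
  Qlowc_scaled (p1 + p2) (fun M ab ab' => G1 M ab ab' + G2 M ab ab').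
Proof.
move=> [n1 [Psi1 [Phi1 [cp1 tr1 ch1 e1]]]] [n2 [Psi2 [Phi2 [cp2 tr2 ch2 e2]]]].
pose glue T (F1 : 'I_n1 -> T) (F2 : 'I_n2 -> T) i :=
  match split i with inl j => F1 j | inr j => F2 j end.
have glue_l T F1 F2 j : glue T F1 F2 (lshift n2 j) = F1 j by rewrite /glue (unsplitK (inl _ j)).
have glue_r T F1 F2 j : glue T F1 F2 (rshift n1 j) = F2 j by rewrite /glue (unsplitK (inr _ j)).
exists (n1 + n2)%N, (glue _ Psi1 Psi2), (glue _ Phi1 Phi2); split.
- by move=> i; rewrite /glue; case: (split i).
- move=> M; rewrite ftr_sum big_split_ord /=.
  under eq_bigr do rewrite glue_l.
  under [X in _ + X]eq_bigr do rewrite glue_r.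
  by rewrite -!ftr_sum tr1 tr2 mulrDl.
- by move=> i; rewrite /glue; case: (split i).
- move=> M ab ab'; rewrite big_split_ord /= e1 e2.
  under [in RHS]eq_bigr do rewrite !glue_l.
  by under [X in _ = _ + X]eq_bigr do rewrite !glue_r.
Qed.

Lemma Qlowc_scaledZ p G (c : C) :
  0 <= c -> Qlowc_scaled p G -> Qlowc_scaled (c * p) (fun M ab ab' => c * G M ab ab').
Proof.
move=> c_ge0 [n [Psi [Phi [cpPsi trPsi chPhi ePsiPhi]]]].
exists n, (fun i M a a' => c * Psi i M a a'), Phi; split=> //.
- by move=> i; exact: cp_mapZ.
- move=> M; rewrite (ftr_sum (fun i a a' => c * Psi i M a a')) -mulrA -trPsi ftr_sum.
  by rewrite mulr_sumr; apply: eq_bigr => i _; rewrite /ftr mulr_sumr.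
- move=> M ab ab'; rewrite ePsiPhi mulr_sumr.
  by under [RHS]eq_bigr do rewrite tensor_mapZl.
Qed.

Lemma Qlowc_scaled1 G : Qlowc_scaled 1 G -> Qlowc G.
Proof.
by move=> [n [Psi [Phi [cpPsi trPsi chPhi ePsiPhi]]]]; exists n, Psi, Phi; split=> // M;
  rewrite trPsi mul1r.
Qed.

End QlowcScaled.

(** * The generators of R_lowc *)

Lemma sum_sigma_bij n (s t : 'I_n -> nat) l
    (f : 'I_l -> {i : 'I_n & ('I_(s i) * 'I_(t i))%type})
    (F : forall i : 'I_n, 'I_(s i) -> 'I_(t i) -> C) :
  bijective f ->
  \sum_(k < l) (let: existT i st := f k in F i st.1 st.2) =
  \sum_(i < n) \sum_(a < s i) \sum_(b < t i) F i a b.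
Proof.
move=> f_bij.
transitivity (\sum_(p : {i : 'I_n & ('I_(s i) * 'I_(t i))%type})
  (let: existT i st := p in F i st.1 st.2)).
  by rewrite (reindex f) //; exact: onW_bij.
transitivity (\sum_(i < n) \sum_(st : ('I_(s i) * 'I_(t i))%type) F i st.1 st.2).
  rewrite (sig_big_dep xpredT (fun i => xpredT) (fun i st => F i st.1 st.2)) /=.
  by apply: eq_bigr => -[i st].
by apply: eq_bigr => i _; rewrite pair_bigA.
Qed.

Section Generator.
Variables (X Y A B : finType) (n : nat) (s t : 'I_n -> nat).
Variables (U : forall i : 'I_n, A -> 'I_(s i) -> X -> C)
          (V : forall i : 'I_n, B -> 'I_(t i) -> Y -> C).
Variables (l : nat) (f : 'I_l -> {i : 'I_n & ('I_(s i) * 'I_(t i))%type}).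
Arguments U : clear implicits.
Arguments V : clear implicits.
Hypothesis f_bij : bijective f.

Definition genW : boi R (X * Y)%type (A * B)%type :=
  @Boi R (X * Y)%type (A * B)%type 1 l
    (fun ab xy => \matrix_(k < l, j < 1)
       let: existT i st := f k in U i ab.1 st.1 xy.1 * V i ab.2 st.2 xy.2).

Lemma genW_gram ab ab' z z' :
  (adjmx (bW genW ab z) *m bW genW ab' z') 0 0 =
  \sum_(i < n) \sum_(a < s i) \sum_(b < t i)
     (U i ab.1 a z.1 * V i ab.2 b z.2)^* * (U i ab'.1 a z'.1 * V i ab'.2 b z'.2).
Proof.
rewrite -(sum_sigma_bij (fun i a b =>
  (U i ab.1 a z.1 * V i ab.2 b z.2)^* * (U i ab'.1 a z'.1 * V i ab'.2 b z'.2)) f_bij).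
by rewrite mxE; apply: eq_bigr => k _; rewrite /adjmx /= !mxE; case: (f k).
Qed.

Lemma sum_genW_gram (M : fmx R (X * Y)%type) ab ab' :
  \sum_z \sum_z' M z z' * (adjmx (bW genW ab z) *m bW genW ab' z') 0 0 =
  \sum_(i < n) tensor_map (kraus_map (U i)) (kraus_map (V i)) M ab ab'.
Proof.
transitivity (\sum_x \sum_y \sum_x' \sum_y' \sum_(i < n) \sum_(a < s i) \sum_(b < t i)
   M (x, y) (x', y') * ((U i ab.1 a x * V i ab.2 b y)^* * (U i ab'.1 a x' * V i ab'.2 b y'))).
  rewrite sumr_pair; apply: eq_bigr => x _; apply: eq_bigr => y _.
  rewrite sumr_pair; apply: eq_bigr => x' _; apply: eq_bigr => y' _.
  rewrite genW_gram mulr_sumr; apply: eq_bigr => i _.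
  by rewrite mulr_sumr; apply: eq_bigr => a _; rewrite mulr_sumr.
rewrite exchange_big5; apply: eq_bigr => i _.
rewrite tensor_kraus_map; apply: eq_bigr => x _.
rewrite exchange_big; apply: eq_bigr => x' _.
apply: eq_bigr => y _; apply: eq_bigr => y' _.
apply: eq_bigr => a _; apply: eq_bigr => b _.
by rewrite rmorphM /=; ring.
Qed.

Lemma GammaW_genW (sigma : 'M[C]_1 -> C) : positive_fun sigma ->
  chan_eq (GammaW (W := genW) sigma)
    (fun M ab ab' => sigma 1%:M * \sum_(i < n) tensor_map (kraus_map (U i)) (kraus_map (V i)) M ab ab').
Proof.
move=> sigma_pos M ab ab'; rewrite -sum_genW_gram mulr_sumr; apply: eq_bigr => z _.
rewrite mulr_sumr; apply: eq_bigr => z' _.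
by rewrite (positive_fun_scalar _ sigma_pos); ring.
Qed.

Hypothesis U_tp : forall x x' : X,
  \sum_(i < n) \sum_(a : A) \sum_(k : 'I_(s i)) (U i a k x)^* * U i a k x' = (x == x')%:R.
Hypothesis V_isom : forall (i : 'I_n) (y y' : Y),
  \sum_(b : B) \sum_(k : 'I_(t i)) (V i b k y)^* * V i b k y' = (y == y')%:R.

Lemma genW_isom : is_isom genW.
Proof.
move=> [x y] [x' y']; apply/matrixP => p q; rewrite !ord1 summxE.
under eq_bigr do rewrite genW_gram.
rewrite !mxE eqxx mulr1n xpair_eqE /= -mulnb natrM -(U_tp x x') mulr_suml.
rewrite sumr_pair exchange_big3; apply: eq_bigr => i _.
rewrite -(V_isom i y y') mulr_suml; apply: eq_bigr => a _.
rewrite exchange_big mulr_suml; apply: eq_bigr => k _ /=.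
rewrite mulr_sumr; apply: eq_bigr => b _.
rewrite mulr_sumr; apply: eq_bigr => k' _.
by rewrite rmorphM /=; ring.
Qed.

Lemma Qlowc_scaled_genW (sigma : 'M[C]_1 -> C) : positive_fun sigma ->
  Qlowc_scaled (sigma 1%:M) (GammaW (W := genW) sigma).
Proof.
move=> sigma_pos; apply: Qlowc_scaled_ext (GammaW_genW sigma_pos) _.
rewrite -[X in Qlowc_scaled X]mulr1; apply: Qlowc_scaledZ; first exact: positive_fun1_ge0.
exists n, (fun i => kraus_map (U i)), (fun i => kraus_map (V i)); split=> //.
- by move=> i; exact: kraus_map_cp.
- by move=> M; rewrite mul1r ftr_sum_kraus_map.
- by move=> i; exact: kraus_map_qchannel (V_isom i).
Qed.

End Generator.

Lemma Rlowc_isom (X Y A B : finType) (W : boi R (X * Y)%type (A * B)%type) :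
  Rlowc W -> is_isom W.
Proof.
elim=> [{}W [n [s [t [U [V [l [f [f_bij U_tp V_isom ->]]]]]]]] | W1 W2 _ isoW1 _ isoW2].
  exact: genW_isom.
exact: dsum_isom.
Qed.

Lemma Qlowc_scaled_Rlowc (X Y A B : finType) (W : boi R (X * Y)%type (A * B)%type) :
  Rlowc W -> forall sigma : 'M[C]_(bh W) -> C, positive_fun sigma ->
  Qlowc_scaled (sigma 1%:M) (GammaW sigma).
Proof.
elim=> [{}W [n [s [t [U [V [l [f [f_bij U_tp V_isom ->]]]]]]]] | W1 W2 _ IH1 _ IH2] sigma sigma_pos.
  exact: Qlowc_scaled_genW.
have -> : sigma 1%:M = sigma (block_mx 1%:M 0 0 0) + sigma (block_mx 0 0 0 1%:M).
  by rewrite -positive_funD // add_block_mx !addr0 add0r -scalar_mx_block.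
apply: Qlowc_scaled_ext (fun M ab ab' => GammaW_dsum M ab ab' sigma_pos) _.
by apply: Qlowc_scaled_add; [apply: IH1; exact: positive_fun_ul | apply: IH2; exact: positive_fun_dr].
Qed.

Lemma Rlowc_separating (X Y A B : finType) (S : (X * Y)%type -> (A * B)%type -> C) :
  (exists z c, S z c != 0) ->
  exists W : boi R (X * Y)%type (A * B)%type, Rlowc W /\ phiW W S != 0.
Proof.
move=> [[x0 y0] [[a0 b0] S0]].
pose s (_ : 'I_1) := #|X|; pose t (_ : 'I_1) := #|Y|.
pose U (i : 'I_1) (a : A) (k : 'I_(s i)) (x : X) : C := ((a == a0) && (k == enum_rank x))%:R.
pose V (i : 'I_1) (b : B) (k : 'I_(t i)) (y : Y) : C := ((b == b0) && (k == enum_rank y))%:R.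
pose T : finType := {i : 'I_1 & ('I_(s i) * 'I_(t i))%type}.
pose f : 'I_#|T| -> T := enum_val.
have embed_isom (D Z : finType) (d0 : D) (z z' : Z) :
    \sum_d \sum_(k : 'I_#|Z|) (((d == d0) && (k == enum_rank z))%:R)^* *
      ((d == d0) && (k == enum_rank z'))%:R = (z == z')%:R :> C.
  under eq_bigr do under eq_bigr do rewrite rmorph_nat.
  by rewrite (sum_kronecker2 d0 (enum_rank z)) eqxx (inj_eq enum_rank_inj).
exists (genW U V f); split.
  apply: Rlowc_gen; exists 1%N, s, t, U, V, #|T|, f; split.
  - exact: enum_val_bij.
  - by move=> x x'; rewrite big_ord1; exact: embed_isom.
  - by move=> i y y'; exact: embed_isom.
  - by [].
pose k0 := enum_rank (existT (fun i : 'I_1 => ('I_(s i) * 'I_(t i))%type) ord0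
  (enum_rank x0, enum_rank y0) : T).
have phiW_k0 : phiW (genW U V f) S k0 ord0 = S (x0, y0) (a0, b0).
  rewrite /phiW summxE -(sum_kronecker_l (x0, y0) (S^~ (a0, b0))); apply: eq_bigr => -[x y] _.
  rewrite summxE -(sum_kronecker_r (a0, b0) (fun c => _ * S _ c)); apply: eq_bigr => -[a b] _.
  rewrite !mxE /f enum_rankK /U /V /= !(inj_eq enum_rank_inj) !xpair_eqE -!natrM.
  rewrite [RHS]mulrAC [RHS]mulrC -natrM.
  by congr (_ * _%:R); rewrite !(eq_sym x0) !(eq_sym y0); do 4 case: (_ == _).
by apply/eqP => phiW0; move: S0; rewrite -phiW_k0 phiW0 mxE eqxx.
Qed.

(** * Kraus decomposition of completely positive maps *)

Lemma psd_quad_form2 (I : finType) (P : fmx R I) i j (l : C) :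
  \sum_p \sum_q ((p == i)%:R + l * (p == j)%:R)^* * P p q * ((q == i)%:R + l * (q == j)%:R)
  = P i i + l * P i j + l^* * P j i + l^* * l * P j j.
Proof.
have kron2 a b (g : I -> I -> C) : \sum_p \sum_q (p == a)%:R * (q == b)%:R * g p q = g a b.
  rewrite -(sum_kronecker2 a b g); apply: eq_bigr => p _; apply: eq_bigr => q _.
  by rewrite -natrM mulnb.
transitivity (\sum_p \sum_q (
    (p == i)%:R * (q == i)%:R * P p q + (p == i)%:R * (q == j)%:R * (l * P p q)
  + (p == j)%:R * (q == i)%:R * (l^* * P p q)
  + (p == j)%:R * (q == j)%:R * (l^* * l * P p q))).
  apply: eq_bigr => p _; apply: eq_bigr => q _.
  by rewrite rmorphD rmorphM /= !conjC_nat; ring.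
under eq_bigr do rewrite !big_split /=.
by rewrite !big_split /= !kron2.
Qed.

Lemma polarization_conj (w Pii Pii' b b' c c' Pjj Pjj' : C) :
  w * w = -1 -> Pii' = Pii -> Pjj' = Pjj ->
  Pii' + b' + c' + Pjj' = Pii + b + c + Pjj ->
  Pii' + - w * b' + w * c' + w * - w * Pjj' = Pii + w * b + - w * c + - w * w * Pjj ->
  b' = c.
Proof.
move=> ww1 eii ejj h1 h2.
have two_neq0 : (2 : C) != 0 by rewrite pnatr_eq0.
apply: (mulfI two_neq0); apply/eqP; rewrite -subr_eq0; apply/eqP.
transitivity ((Pii' + b' + c' + Pjj' - (Pii + b + c + Pjj))
   + w * (Pii' + - w * b' + w * c' + w * - w * Pjj' - (Pii + w * b + - w * c + - w * w * Pjj))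
   - (1 + w) * (Pii' - Pii) - (1 + w - w * (w * w + 1)) * (Pjj' - Pjj)
   + (w * w + 1) * (b' - c' + b - c)); first by ring.
by rewrite h1 h2 eii ejj ww1; ring.
Qed.

Lemma psd_adj (I : finType) (P : fmx R I) : psd P -> forall i j, P j i = (P i j)^*.
Proof.
move=> psdP i j.
have quad_real k k' l : (P k k + l * P k k' + l^* * P k' k + l^* * l * P k' k')^*
    = P k k + l * P k k' + l^* * P k' k + l^* * l * P k' k'.
  by apply: geC0_conj; rewrite -psd_quad_form2; exact: psdP.
have diag_real k : (P k k)^* = P k k.
  by have := quad_real k k 0; rewrite !(conjC0, mul0r, addr0).
have := quad_real i j 1; rewrite conjC1 !mul1r !rmorphD /= => h1.
have := quad_real i j 'i; rewrite conjCi !rmorphD !rmorphM /= !rmorphN /= conjCi opprK => h2.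
by symmetry; exact: (polarization_conj (@mulCii C) (diag_real i) (diag_real j) h1 h2).
Qed.

Definition gram_factor N (P : 'M[C]_N) : 'M[C]_N :=
  \matrix_(k, p) (sqrtC (spectral_diag P 0 k) * spectralmx P k p).

(* The spectral theorem [P = U^* D U] with [D >= 0] gives [P = G^* G] for [G = sqrt D U]. *)
Lemma psd_mx_gram N (P : 'M[C]_N) : psd (fun p q => P p q) ->
  forall p q, P p q = \sum_k (gram_factor P k p)^* * gram_factor P k q.
Proof.
move=> psdP.
have P_herm : P \is hermsymmx.
  apply/is_hermitianmxP; rewrite expr0 scale1r; apply/matrixP => i j; rewrite !mxE.
  exact: (psd_adj psdP).
have /orthomx_spectralP P_spectral := hermitian_normalmx P_herm.
have U_unitary := spectral_unitarymx P.
rewrite invmx_unitary // in P_spectral.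
set U := spectralmx P in P_spectral U_unitary *.
set d := spectral_diag P in P_spectral *.
have UU1 := unitarymxP U_unitary.
have d_ge0 k : 0 <= d 0 k.
  have <- : (U *m P *m U ^t conjC) k k = d 0 k.
    by rewrite {1}P_spectral !mulmxA UU1 mul1mx -!mulmxA UU1 mulmx1 mxE eqxx mulr1n.
  have := psdP (fun q => (U k q)^*).
  suff -> : \sum_p \sum_q ((U k p)^*)^* * P p q * (U k q)^* = (U *m P *m U ^t conjC) k k by [].
  rewrite mxE exchange_big; apply: eq_bigr => q _.
  by rewrite !mxE mulr_suml; apply: eq_bigr => p _; rewrite conjCK.
move=> p q; rewrite {1}P_spectral mxE; apply: eq_bigr => k _.
have sqrt_real : (sqrtC (d 0 k))^* = sqrtC (d 0 k) by rewrite geC0_conj // sqrtC_ge0.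
rewrite mul_mx_diag !mxE -/U -/d rmorphM /= sqrt_real.
by rewrite mulrACA -expr2 sqrtCK; ring.
Qed.

Lemma psd_enum (T : finType) (P : fmx R T) :
  psd P -> psd (fun i j : 'I_#|T| => P (enum_val i) (enum_val j)).
Proof.
move=> psdP u; have := psdP (fun p => u (enum_rank p)).
have ev_bij : {on predT, bijective (enum_val : 'I_#|T| -> T)} := onW_bij _ (@enum_val_bij T).
rewrite (reindex _ ev_bij); under eq_bigr do rewrite (reindex _ ev_bij).
by under eq_bigr do under eq_bigr do rewrite !enum_valK.
Qed.

Definition gram_factor_fin (T : finType) (P : fmx R T) : 'I_#|T| -> T -> C :=
  fun k p => gram_factor (\matrix_(i, j) P (enum_val i) (enum_val j)) k (enum_rank p).

Lemma psd_gram (T : finType) (P : fmx R T) : psd P ->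
  forall p q, P p q = \sum_k (gram_factor_fin P k p)^* * gram_factor_fin P k q.
Proof.
move=> /psd_enum psdP p q; rewrite /gram_factor_fin.
set PM := \matrix_(i, j) _.
have -> : P p q = PM (enum_rank p) (enum_rank q) by rewrite mxE !enum_rankK.
apply: psd_mx_gram => u.
by under eq_bigr do under eq_bigr do rewrite mxE; exact: psdP.
Qed.

Definition max_entangled (X : finType) : fmx R (X * 'I_#|X|)%type :=
  fun p q => munit R (enum_val p.2) (enum_val q.2) p.1 q.1.
Arguments max_entangled : clear implicits.

Lemma psd_max_entangled (X : finType) : psd (max_entangled X).
Proof.
move=> v; set w := \sum_j v (enum_val j, j).
suff -> : \sum_p \sum_q (v p)^* * max_entangled X p q * v q = w^* * w.
  by rewrite mulrC mul_conjC_ge0.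
transitivity (\sum_j \sum_j' \sum_x \sum_x'
    ((x == enum_val j) && (x' == enum_val j'))%:R * ((v (x, j))^* * v (x', j'))).
  rewrite sumr_pair exchange_big; apply: eq_bigr => j _.
  under eq_bigr do rewrite sumr_pair.
  rewrite exchange_big3; apply: eq_bigr => j' _; apply: eq_bigr => x _; apply: eq_bigr => x' _.
  by rewrite /max_entangled /munit /=; ring.
under eq_bigr do under eq_bigr do rewrite sum_kronecker2.
by rewrite rmorph_sum mulr_suml; apply: eq_bigr => j _; rewrite mulr_sumr.
Qed.

Definition choi (X A : finType) (Psi : fmx R X -> fmx R A) : fmx R (A * 'I_#|X|)%type :=
  ampl Psi (max_entangled X).

Definition kraus_of (X A : finType) (Psi : fmx R X -> fmx R A) :
    A -> 'I_#|{: A * 'I_#|X|}| -> X -> C :=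
  fun a k x => gram_factor_fin (choi Psi) k (a, enum_rank x).

Section KrausOf.
Variables (X A : finType) (Psi : fmx R X -> fmx R A).
Hypothesis Psi_cp : cp_map Psi.

Lemma kraus_ofE x x' a a' :
  Psi (munit R x x') a a' = \sum_k (kraus_of Psi a k x)^* * kraus_of Psi a' k x'.
Proof.
have := psd_gram ((proj2 Psi_cp) _ _ (@psd_max_entangled X)) (a, enum_rank x) (a', enum_rank x').
by rewrite /ampl /max_entangled /= !enum_rankK.
Qed.

Lemma kraus_map_kraus_of x x' a a' :
  Psi (munit R x x') a a' = kraus_map (kraus_of Psi) (munit R x x') a a'.
Proof. by rewrite kraus_map_munit kraus_ofE. Qed.

Lemma sum_kraus_of x x' :
  \sum_a \sum_k (kraus_of Psi a k x)^* * kraus_of Psi a k x' = ftr (Psi (munit R x x')).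
Proof. by apply: eq_bigr => a _; rewrite kraus_ofE. Qed.

End KrausOf.

Lemma is_state_positive_fun h (sigma : 'M[C]_h -> C) : is_state sigma -> positive_fun sigma.
Proof. by case. Qed.

Lemma is_state_entry00 : is_state (fun T : 'M[C]_1 => T 0 0).
Proof.
split=> [c T T' | T | ]; rewrite ?mxE //.
by apply: sumr_ge0 => k _; rewrite !mxE mulrC mul_conjC_ge0.
Qed.

Lemma Rlowc_resource (X Y A B : finType) : resource (@Rlowc R X Y A B).
Proof. by split; [exact: Rlowc_isom | exact: Rlowc_sum | exact: Rlowc_separating]. Qed.

Lemma QC_Rlowc_Qlowc (X Y A B : finType) (G : fmx R (X * Y)%type -> fmx R (A * B)%type) :
  QC (@Rlowc R X Y A B) G -> Qlowc G.
Proof.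
case=> W [RW [sigma [sigma_state eG]]]; apply: Qlowc_scaled1.
case: (sigma_state) => _ _ <-; apply: Qlowc_scaled_ext eG _.
exact/Qlowc_scaled_Rlowc/is_state_positive_fun.
Qed.

Lemma Qlowc_QC_Rlowc (X Y A B : finType) (G : fmx R (X * Y)%type -> fmx R (A * B)%type) :
  Qlowc G -> QC (@Rlowc R X Y A B) G.
Proof.
case=> n [Psi [Phi [Psi_cp Psi_tp Phi_ch eG]]].
pose s (_ : 'I_n) := #|{: A * 'I_#|X|}|; pose t (_ : 'I_n) := #|{: B * 'I_#|Y|}|.
pose U i : A -> 'I_(s i) -> X -> C := kraus_of (Psi i).
pose V i : B -> 'I_(t i) -> Y -> C := kraus_of (Phi i).
pose T : finType := {i : 'I_n & ('I_(s i) * 'I_(t i))%type}.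
pose f : 'I_#|T| -> T := enum_val.
have U_tp x x' :
    \sum_(i < n) \sum_a \sum_(k : 'I_(s i)) (U i a k x)^* * U i a k x' = (x == x')%:R.
  under eq_bigr do rewrite sum_kraus_of //.
  by rewrite -(ftr_sum (fun i => Psi i (munit R x x'))) Psi_tp ftr_munit.
have V_isom i y y' :
    \sum_b \sum_(k : 'I_(t i)) (V i b k y)^* * V i b k y' = (y == y')%:R.
  by case: (Phi_ch i) => Phi_cp Phi_tp; rewrite sum_kraus_of // Phi_tp ftr_munit.
exists (genW U V f); split.
  by apply: Rlowc_gen; exists n, s, t, U, V, #|T|, f; split=> //; exact: enum_val_bij.
exists (fun T : 'M[C]_1 => T 0 0); split; first exact: is_state_entry00.
move=> M ab ab'; rewrite eG (GammaW_genW U V (@enum_val_bij T) (is_state_positive_fun is_state_entry00)).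
rewrite mxE mul1r; apply: eq_bigr => i _.
apply: eq_tensor_map => *; first exact: kraus_map_kraus_of.
by apply: kraus_map_kraus_of; case: (Phi_ch i).
Qed.

End LowcResource.

Theorem proposition5p10 (R : realType) (X Y A B : finType) :
  (0 < #|X|)%N -> (0 < #|Y|)%N -> (0 < #|A|)%N -> (0 < #|B|)%N ->
  resource (@Rlowc R X Y A B) /\
  (forall G : fmx R (X * Y)%type -> fmx R (A * B)%type, QC (@Rlowc R X Y A B) G <-> Qlowc G).
Proof.
move=> _ _ _ _; split; first exact: Rlowc_resource.
by move=> G; split; [exact: QC_Rlowc_Qlowc | exact: Qlowc_QC_Rlowc].
Qed.
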